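(* Let $n=2k+1$ be odd and let $A$ be an $n\times n$ semi-ASM. Then there exist pairwise disjoint $n\times n$ permutation matrices $P_1,\ldots,P_n$ with $P_1+\cdots+P_n=J_n$ such that every position where $A$ has entry $-1$ is a position of a $1$ in some $P_i$ with $i\le k$, and every position where $A$ has entry $1$ is a position of a $1$ in some $P_i$ with $k<i\le n$.
   Context: A semi-ASM of order $n$ is an $n\times n$ matrix with entries in $\{0,1,-1\}$ all of whose row sums and column sums equal $1$. $J_n$ is the $n\times n$ all-ones matrix. Two $(0,1)$-matrices are disjoint if their sum is again a $(0,1)$-matrix. *)

From HB Require Import structures.
From mathcomp Require Import all_boot all_order all_algebra all_fingroup.
Set Implicit Arguments. Unset Strict Implicit. Unset Printing Implicit Defensive.
Import Order.TTheory GRing.Theory Num.Theory.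
Local Open Scope ring_scope.

Definition semiASM (n : nat) (A : 'M[int]_n) : Prop :=
  (forall i j, A i j = 0 \/ A i j = 1 \/ A i j = -1) /\
  (forall i, \sum_(j < n) A i j = 1) /\
  (forall j, \sum_(i < n) A i j = 1).

Definition is01mx (n : nat) (A : 'M[int]_n) : Prop :=
  forall i j, A i j = 0 \/ A i j = 1.

Definition disjoint01 (n : nat) (A B : 'M[int]_n) : Prop := is01mx (A + B).

Definition Jmx (n : nat) : 'M[int]_n := const_mx 1.

From HB Require Import structures.
From mathcomp Require Import all_boot all_order all_algebra all_fingroup.
From mathcomp Require Import zify.
Set Implicit Arguments. Unset Strict Implicit. Unset Printing Implicit Defensive.
Import Order.TTheory GRing.Theory Num.Theory.

(* In a line of A with m entries -1 and p entries 1 we have p - m = 1 and p + m + z = 2k + 1,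
   so the line has z = 2(k - m) zeros.  The zeros thus form a bipartite graph with even
   degrees; an Eulerian orientation of it selects exactly half of them in every line, and
   together with the -1 entries they form a k-regular bipartite graph H whose complement,
   which contains every entry 1, is (k+1)-regular.  By Hall's theorem a regular bipartite
   graph is an edge-disjoint union of perfect matchings; the k matchings of H followed by
   the k+1 matchings of its complement give the permutation matrices P_1, ..., P_n. *)

Lemma card_sum_nat (T : finType) (P : pred T) : #|P| = \sum_x (P x : nat).
Proof.
by rewrite -sum1_card big_mkcond; apply: eq_bigr => x _; rewrite unfold_in; case: (P x).
Qed.

Lemma count_enum (T : finType) (Q P : pred T) :
  count P (enum Q) = #|[pred x | Q x && P x]|.
Proof.
rewrite cardE /enum_mem size_filter count_filter.
by apply: eq_count => x; rewrite !inE andbC.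
Qed.

Lemma card_split (T : finType) (P c : pred T) :
  #|[pred x | P x && c x]| + #|[pred x | P x && ~~ c x]| = #|P|.
Proof.
rewrite -(cardID c P); congr (_ + _); apply: eq_card => x; rewrite !inE //.
by rewrite andbC.
Qed.

Lemma card_predU_disjoint (T : finType) (A B : pred T) : (forall x, A x -> ~~ B x) ->
  #|[pred x | A x || B x]| = #|A| + #|B|.
Proof.
move=> dAB; rewrite -cardUI [X in _ + X]eq_card0 ?addn0; first by apply: eq_card.
by move=> x; rewrite !inE; apply/negbTE/nandP; case: (boolP (A x)) => [/dAB|]; auto.
Qed.

Section Hall.
Variables T1 T2 : finType.
Implicit Types (R : T1 -> T2 -> bool) (A B S : {set T1}) (Y : {set T2}).

Definition neighbours R A : {set T2} := \bigcup_(x in A) [set y | R x y].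

Definition hall_condition R S := forall A, A \subset S -> #|A| <= #|neighbours R A|.

Definition matchable R S :=
  exists f : T1 -> T2, {in S &, injective f} /\ {in S, forall x, R x (f x)}.

Definition restrict R Y x y := R x y && (y \in Y).

Lemma neighboursP R A y : reflect (exists2 x, x \in A & R x y) (y \in neighbours R A).
Proof.
by apply: (iffP bigcupP) => -[x xA Rxy]; exists x; rewrite // inE in Rxy *.
Qed.

Lemma neighboursU R A B : neighbours R (A :|: B) = neighbours R A :|: neighbours R B.
Proof. exact: bigcup_setU. Qed.

Lemma neighbours_restrict R Y A : neighbours (restrict R Y) A = neighbours R A :&: Y.
Proof.
apply/setP => y; rewrite inE; apply/neighboursP/andP => [[x xA /andP[Rxy yY]]|].
  by split=> //; apply/neighboursP; exists x.
by case=> /neighboursP[x xA Rxy] yY; exists x; rewrite // /restrict Rxy.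
Qed.

Lemma hall_condition_sub R S A : A \subset S -> hall_condition R S -> hall_condition R A.
Proof. by move=> sAS hall B sBA; apply/hall/(subset_trans sBA). Qed.

Lemma matchable_neighbours R A : matchable R A -> matchable (restrict R (neighbours R A)) A.
Proof.
case=> f [f_inj Rf]; exists f; split=> // x xA.
by rewrite /restrict Rf //; apply/neighboursP; exists x; rewrite ?Rf.
Qed.

Lemma matchable_glue R Y A S : A \subset S ->
  matchable (restrict R Y) A -> matchable (restrict R (~: Y)) (S :\: A) ->
  matchable R S.
Proof.
move=> sAS [f1 [f1_inj Rf1]] [f2 [f2_inj Rf2]].
have f1A x : x \in A -> R x (f1 x) && (f1 x \in Y) := Rf1 x.
have f2D x : x \in S -> x \notin A -> R x (f2 x) && (f2 x \notin Y).
  by move=> xS xA; rewrite -in_setC; apply: Rf2; rewrite inE xA.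
exists (fun x => if x \in A then f1 x else f2 x); split=> [x y xS yS|x xS].
  case: ifP => xA; case: ifP => yA.
  - exact: f1_inj.
  - move=> fxy; have /andP[_] := f2D y yS (negbT yA).
    by rewrite -fxy; case/andP: (f1A x xA) => _ ->.
  - move=> fxy; have /andP[_] := f2D x xS (negbT xA).
    by rewrite fxy; case/andP: (f1A y yA) => _ ->.
  - by apply: f2_inj; rewrite inE ?xA ?yA.
by case: ifP => xA; [case/andP: (f1A x xA) | case/andP: (f2D x xS (negbT xA))].
Qed.

Lemma hall_condition_critical R S A : A \subset S -> hall_condition R S ->
  #|neighbours R A| <= #|A| ->
  hall_condition (restrict R (~: neighbours R A)) (S :\: A).
Proof.
move=> sAS hall critA B; rewrite subsetD => /andP[sBS dBA].
rewrite neighbours_restrict -setDE.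
have := hall (B :|: A); rewrite subUset sBS sAS neighboursU => /(_ isT).
rewrite cardsU (disjoint_setI0 dBA) cards0 subn0.
have := cardsID (neighbours R A) (neighbours R B).
have := cardsUI (neighbours R B) (neighbours R A).
rewrite setIC; lia.
Qed.

Lemma hall_condition_surplus R S x y : x \in S -> R x y ->
  (forall B, B \proper S -> B != set0 -> #|B| < #|neighbours R B|) ->
  hall_condition (restrict R (~: [set y])) (S :\ x).
Proof.
move=> xS Rxy surplus B sB.
have [-> | nB0] := eqVneq B set0; first by rewrite cards0.
have pBS : B \proper S.
  rewrite properE (subset_trans sB (subsetDl _ _)) /=.
  apply: contraL sB => /subsetP/(_ x xS) xB.
  by apply/subsetPn; exists x; rewrite // !inE eqxx.
rewrite neighbours_restrict -setDE.
by have := surplus B pBS nB0; have := cardsD1 y (neighbours R B); lia.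
Qed.

Theorem hall_marriage (y0 : T2) R S : hall_condition R S -> matchable R S.
Proof.
(* Either some nonempty proper A is critical, and A and S :\: A are matched separately,
   or every such A has a surplus of neighbours, and any edge x-y may be used. *)
have [m] := ubnP #|S|; elim: m R S => // m IH R S /ltnSE leSm hall.
have [-> | [x xS]] := set_0Vmem S.
  by exists (fun=> y0); split=> [? ?|?]; rewrite inE.
have [/existsP[A /and3P[pAS nA0 critA]] | /existsPn surplus] :=
  boolP [exists A : {set T1}, [&& A \proper S, A != set0 & #|neighbours R A| <= #|A|]].
- have sAS := proper_sub pAS.
  apply: (matchable_glue sAS).
    apply/matchable_neighbours/IH; last exact: hall_condition_sub hall.
    by have := proper_card pAS; lia.
  apply: IH (hall_condition_critical sAS hall critA).
  rewrite cardsD (setIidPr sAS); have := card_gt0 A; rewrite nA0.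
  by have := subset_leq_card sAS; lia.
- have [y /neighboursP[_ /set1P-> Rxy]] : exists y, y \in neighbours R [set x].
    by apply/card_gt0P; have := hall [set x]; rewrite sub1set xS cards1; apply.
  apply: (@matchable_glue _ [set y] [set x]); first by rewrite sub1set.
    exists (fun=> y); split=> [? ? /set1P-> /set1P->|? /set1P->] //.
    by rewrite /restrict Rxy set11.
  apply: IH (hall_condition_surplus xS Rxy _).
    by have := cardsD1 x S; rewrite xS; lia.
  by move=> B pBS nB0; have := surplus B; rewrite pBS nB0 /= -ltnNge.
Qed.
End Hall.

Section RegularRelations.
Variable T : finType.
Implicit Types (G : rel T) (s : {perm T}).

Definition regular G d := (forall x, #|G x| = d) /\ (forall y, #|G^~ y| = d).

Lemma regular_hall G d : 0 < d -> regular G d -> hall_condition G [set: T].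
Proof.
move=> d_gt0 [rowG colG] A _; set N := neighbours G A.
rewrite -(leq_pmul2r d_gt0).
have -> : #|A| * d = \sum_(x in A) \sum_(y in N) (G x y : nat).
  rewrite -sum_nat_const; apply: eq_bigr => x xA.
  rewrite -(rowG x) card_sum_nat (bigID (mem N)) /= [X in _ + X]big1 ?addn0 // => y yN.
  by apply/eqP; rewrite eqb0; apply: contra yN => Gxy; apply/neighboursP; exists x.
rewrite exchange_big -sum_nat_const leq_sum // => y _.
by rewrite -(colG y) card_sum_nat [X in _ <= X](bigID (mem A)) leq_addr.
Qed.

Lemma regular_perfect_matching G d : 0 < d -> regular G d ->
  exists s, forall x, G x (s x).
Proof.
move=> d_gt0 regG; have [T0 | [y0 _]] := set_0Vmem [set: T].
  by exists 1%g => x; have := in_setT x; rewrite T0 inE.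
have [f [f_inj Gf]] := hall_marriage y0 (regular_hall d_gt0 regG).
have {}f_inj : injective f by move=> x y; apply: f_inj; rewrite inE.
by exists (perm f_inj) => x; rewrite permE Gf ?inE.
Qed.

Lemma regular_delete_perm G d s : regular G d.+1 -> (forall x, G x (s x)) ->
  regular [rel x y | G x y && (y != s x)] d.
Proof.
move=> [rowG colG] Gs; split=> [x | y].
  apply/eq_add_S; rewrite -(rowG x) [in RHS](cardD1 (s x)) unfold_in Gs add1n.
  by congr _.+1; apply: eq_card => y; rewrite !inE andbC.
apply/eq_add_S; rewrite -(colG y) [in RHS](cardD1 ((s^-1)%g y)) unfold_in /=.
have := Gs ((s^-1)%g y); rewrite permKV => -> /=; rewrite add1n.
congr _.+1; apply: eq_card => x; rewrite !inE andbC; congr (_ && _).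
by rewrite -(can2_eq (permK s) (permKV s)) eq_sym.
Qed.

Lemma regular_decomposition G d : regular G d ->
  exists s : 'I_d -> {perm T},
    (forall i x, G x (s i x)) /\ (forall x, injective (fun i => s i x)).
Proof.
elim: d G => [|d IH] G regG; first by exists (fun=> 1%g); split=> [|x] [] //.
have [s0 Gs0] := regular_perfect_matching (ltn0Sn d) regG.
have [s [Gs s_inj]] := IH _ (regular_delete_perm regG Gs0).
exists (fun i => if unlift ord_max i is Some j then s j else s0); split.
  by move=> i x; case: unliftP => [j _|_] //; case/andP: (Gs j x).
move=> x i j /=; case: unliftP => [i' ->|->]; case: unliftP => [j' ->|->] //.
- by move/s_inj->.
- by move=> sx; case/andP: (Gs i' x); rewrite sx eqxx.
- by move=> sx; case/andP: (Gs j' x); rewrite sx eqxx.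
Qed.

Lemma regular_compl G d : regular G d -> regular [rel x y | ~~ G x y] (#|T| - d).
Proof.
case=> rowG colG; split=> [x | y].
  by rewrite -(rowG x) -(cardC (G x)) addKn; apply: eq_card.
by rewrite -(colG y) -(cardC (G^~ y)) addKn; apply: eq_card.
Qed.

Lemma regular_split_decomposition G d m : #|T| = m -> d <= m -> regular G d ->
  exists s : 'I_m -> {perm T},
    (forall x, injective (fun i => s i x)) /\ (forall i x, G x (s i x) = (i < d)).
Proof.
move=> cardT le_dm regG; have e_m : d + (m - d) = m by rewrite subnKC.
have [s1 [Gs1 s1_inj]] := regular_decomposition regG.
have [s2 [Gs2 s2_inj]] := regular_decomposition (regular_compl regG).
rewrite cardT in s2 Gs2 s2_inj.
pose s i := match split (cast_ord (esym e_m) i) with inl j => s1 j | inr j => s2 j end.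
have Gs i x : G x (s i x) = (i < d).
  rewrite /s; case: splitP => j /= ->; first by rewrite Gs1 ltn_ord.
  by rewrite ltnNge leq_addr; apply/negbTE/Gs2.
exists s; split=> // x i j sx; apply: val_inj; move: sx (Gs i x) (Gs j x).
rewrite /s; case: splitP => i' /= ->; case: splitP => j' /= ->.
- by move/s1_inj->.
- by move=> ->; rewrite ltn_ord ltnNge leq_addr => ->.
- by move=> ->; rewrite ltn_ord ltnNge leq_addr => ->.
- by move/s2_inj->.
Qed.

End RegularRelations.

Section EulerOrientation.
Variable V : eqType.
Implicit Types (u v x : V) (s t : seq (V * V)) (o : seq ((V * V) * bool)).

Definition source (eb : (V * V) * bool) := if eb.2 then eb.1.1 else eb.1.2.
Definition target (eb : (V * V) * bool) := if eb.2 then eb.1.2 else eb.1.1.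

Definition degree x s := count (fun e => e.1 == x) s + count (fun e => e.2 == x) s.

Definition balanced o :=
  forall x, count (fun eb => source eb == x) o = count (fun eb => target eb == x) o.

Lemma degree_cons x e s : degree x (e :: s) = (e.1 == x) + (e.2 == x) + degree x s.
Proof. by rewrite /degree /=; lia. Qed.

Lemma has_incident x s : odd (degree x s) -> has (fun e => (e.1 == x) || (e.2 == x)) s.
Proof.
rewrite has_count; apply: contraTT; rewrite -leqNgt leqn0 => /eqP c0.
have le1 : count (fun e => e.1 == x) s <= 0.
  by rewrite -c0; apply: sub_count => e /= ->.
have le2 : count (fun e => e.2 == x) s <= 0.
  by rewrite -c0; apply: sub_count => e /= ->; rewrite orbT.
by rewrite /degree; move: le1 le2; rewrite !leqn0 => /eqP-> /eqP->.
Qed.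

(* Splitting an oriented edge u-w into the path u-v-w, oriented the same way, adds one
   leaving and one entering edge at v and changes nothing elsewhere. *)
Lemma split_oriented_edge u v a b b0 x : (a == v) || (b == v) ->
  let w := if a == v then b else a in
  let b1 := if b0 then a == v else b == v in
  (source ((u, v), b0) == x) + (source ((a, b), b1) == x)
    = (source ((u, w), b0) == x) + (v == x) /\
  (target ((u, v), b0) == x) + (target ((a, b), b1) == x)
    = (target ((u, w), b0) == x) + (v == x).
Proof.
case: (eqVneq a v) => [->|av]; case: (eqVneq b v) => [->|bv] //= _;
  case: b0; rewrite /source /target /= ?eqxx ?(negbTE av) ?(negbTE bv) /=; lia.
Qed.

Lemma degree_merge x u v a b t1 t2 : (a == v) || (b == v) ->
  degree x ((u, v) :: t1 ++ (a, b) :: t2)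
    = degree x ((u, if a == v then b else a) :: t1 ++ t2) + (v == x).*2.
Proof.
rewrite /degree /= !count_cat /= -addnn.
by case: (eqVneq a v) => [->|_ /eqP ->] /=; lia.
Qed.

Theorem euler_orientation s : (forall x, ~~ odd (degree x s)) ->
  exists2 o, map fst o = s & balanced o.
Proof.
have [m] := ubnP (size s); elim: m s => // m IH [|[u v] t] /ltnSE /= le_tm even_s.
  by exists [::].
case: (eqVneq u v) even_s => [<- | neq_uv] even_s.
  have [o <- bal_o] : exists2 o, map fst o = t & balanced o.
    by apply: IH => // x; have := even_s x; rewrite degree_cons /= addnn oddD odd_double.
  by exists (((u, u), true) :: o) => // x; rewrite /= /source /target /= bal_o.
(* v has odd degree in t, so t has another edge v-w: merge u-v and v-w into u-w,
   orient the shorter list by induction, and split the edge back. *)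
have /hasP[[a b] ab_t /= vab] : has (fun e => (e.1 == v) || (e.2 == v)) t.
  apply: has_incident; have := even_s v; rewrite degree_cons /= eqxx (negbTE neq_uv).
  by rewrite add1n /= negbK.
move: le_tm even_s; case/splitPr: ab_t => t1 t2 le_tm even_s.
set w := if a == v then b else a.
have [[|[e0 b0] o'] //= [e0E e_o'] bal] : exists2 o, map fst o = (u, w) :: t1 ++ t2 & balanced o.
  apply: IH => [|x]; first by move: le_tm; rewrite /= !size_cat /=; lia.
  by have := even_s x; rewrite degree_merge // oddD odd_double addbF.
subst e0; pose o1 := take (size t1) o'; pose o2 := drop (size t1) o'.
have e_o1 : map fst o1 = t1 by rewrite map_take e_o' take_size_cat.
have e_o2 : map fst o2 = t2 by rewrite map_drop e_o' drop_size_cat.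
exists (((u, v), b0) :: o1 ++ ((a, b), if b0 then a == v else b == v) :: o2).
  by rewrite /= map_cat /= e_o1 e_o2.
move=> x; have := bal x; rewrite -(cat_take_drop (size t1) o') -/o1 -/o2 /= !count_cat /=.
have [] := split_oriented_edge u b0 x vab; rewrite -/w; lia.
Qed.

Lemma euler_orientation_uniq s : uniq s -> (forall x, ~~ odd (degree x s)) ->
  exists b : V * V -> bool, balanced [seq (e, b e) | e <- s].
Proof.
move=> s_uniq /euler_orientation[o e_o bal]; subst s.
exists (fun e => nth false (map snd o) (index e (map fst o))).
suff -> : [seq (e, nth false (map snd o) (index e (map fst o))) | e <- map fst o] = o by [].
clear bal; elim: o s_uniq => //= -[e b] o IH /andP[eo uo].
rewrite eqxx /=; congr (_ :: _); rewrite -[RHS]IH //.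
by apply/eq_in_map => e' e'o /=; rewrite ifN //; apply: contraNneq eo => ->.
Qed.
End EulerOrientation.

Section Pairs.
Variables (T1 T2 : finType) (Q r : pred (T1 * T2)).

Lemma count_enum_fst x :
  count (fun p => r p && (p.1 == x)) (enum Q) = #|[pred y | Q (x, y) && r (x, y)]|.
Proof.
have pair_inj : injective (@pair T1 T2 x) by move=> y y' [->].
rewrite count_enum -(card_image pair_inj); apply: eq_card => -[a y]; rewrite !inE /=.
have [-> | ax] := eqVneq a x; first by rewrite mem_image // !inE andbT.
rewrite !andbF; apply/esym/imageP => -[y' _ [eax _]].
by rewrite eax eqxx in ax.
Qed.

Lemma count_enum_snd y :
  count (fun p => r p && (p.2 == y)) (enum Q) = #|[pred x | Q (x, y) && r (x, y)]|.
Proof.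
have pair_inj : injective (fun x => (x, y) : T1 * T2) by move=> x x' [].
rewrite count_enum -(card_image pair_inj); apply: eq_card => -[x b]; rewrite !inE /=.
have [-> | b_y] := eqVneq b y; first by rewrite mem_image // !inE andbT.
rewrite !andbF; apply/esym/imageP => -[x' _ [_ eby]].
by rewrite eby eqxx in b_y.
Qed.
End Pairs.

Lemma bipartite_balanced_orientation (T1 T2 : finType) (Z : T1 -> T2 -> bool) :
  (forall x, ~~ odd #|Z x|) -> (forall y, ~~ odd #|Z^~ y|) ->
  exists c : T1 -> T2 -> bool,
    (forall x, #|[pred y | Z x y && c x y]| = #|[pred y | Z x y && ~~ c x y]|) /\
    (forall y, #|[pred x | Z x y && c x y]| = #|[pred x | Z x y && ~~ c x y]|).
Proof.
move=> even_row even_col.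
pose L := enum [pred p : T1 * T2 | Z p.1 p.2].
pose edge (p : T1 * T2) : (T1 + T2) * (T1 + T2) := (inl p.1, inr p.2).
have edge_inj : injective edge by move=> [? ?] [? ?] [-> ->].
have row_count r x : count (fun p => r p && (p.1 == x)) L = #|[pred y | Z x y && r (x, y)]|.
  exact: count_enum_fst.
have col_count r y : count (fun p => r p && (p.2 == y)) L = #|[pred x | Z x y && r (x, y)]|.
  exact: count_enum_snd.
have [b bal] : exists b, balanced [seq (e, b e) | e <- map edge L].
  apply: euler_orientation_uniq; first by rewrite map_inj_uniq ?enum_uniq.
  case=> [x | y]; rewrite /degree !count_map.
    rewrite [X in _ + X](@eq_count _ _ pred0) // count_pred0 addn0.
    rewrite (@eq_count _ _ (fun p => xpredT p && (p.1 == x))) // row_count.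
    by rewrite (eq_card (B := Z x)) // => y; rewrite !inE andbT.
  rewrite [X in X + _](@eq_count _ _ pred0) // count_pred0 add0n.
  rewrite (@eq_count _ _ (fun p => xpredT p && (p.2 == y))) // col_count.
  by rewrite (eq_card (B := Z^~ y)) // => x; rewrite !inE andbT.
have count_o (P : pred ((T1 + T2) * (T1 + T2) * bool)) Q :
    (forall p, P (edge p, b (edge p)) = Q p) ->
    count P [seq (e, b e) | e <- map edge L] = count Q L.
  by move=> PQ; rewrite -map_comp count_map; apply: eq_count => p; apply: PQ.
(* c p: the edge p is oriented from its row to its column. *)
pose c p := b (edge p).
exists (fun x y => c (x, y)); split=> [x | y].
  have := bal (inl x); rewrite (count_o _ (fun p => c p && (p.1 == x))) => [|p].
    rewrite (count_o _ (fun p => ~~ c p && (p.1 == x))) => [|p].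
      by rewrite !row_count.
    by rewrite /target /c /=; case: (b _).
  by rewrite /source /c /=; case: (b _).
have := bal (inr y); rewrite (count_o _ (fun p => ~~ c p && (p.2 == y))) => [|p].
  rewrite (count_o _ (fun p => c p && (p.2 == y))) => [|p].
    by rewrite !col_count.
  by rewrite /target /c /=; case: (b _).
by rewrite /source /c /=; case: (b _).
Qed.

Lemma bipartite_halving (T1 T2 : finType) (Z : T1 -> T2 -> bool) :
  (forall x, ~~ odd #|Z x|) -> (forall y, ~~ odd #|Z^~ y|) ->
  exists2 F : T1 -> T2 -> bool, (forall x y, F x y -> Z x y) &
    (forall x, (#|F x|).*2 = #|Z x|) /\ (forall y, (#|F^~ y|).*2 = #|Z^~ y|).
Proof.
move=> /bipartite_balanced_orientation/[apply] -[c [c_row c_col]].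
exists (fun x y => Z x y && c x y) => [x y /andP[] // | ]; split=> [x | y].
  by rewrite -addnn -[in RHS](card_split (Z x) (c x)) c_row.
by rewrite -addnn -[in RHS](card_split (Z^~ y) (c^~ y)) c_col.
Qed.

Lemma line_counts (T : finType) k (a : T -> int) : #|T| = (2 * k + 1)%N ->
  (forall j, a j = 0 \/ a j = 1 \/ a j = -1)%R -> (\sum_j a j = 1)%R ->
  #|[pred j | a j == 0%R]| + (#|[pred j | a j == (-1)%R]|).*2 = k.*2.
Proof.
move=> cardT a_val sum_a.
set z := #|_|; set m := #|_|; pose p := #|[pred j | a j == 1%R]|.
have sum_pm : (p%:Z - m%:Z = 1)%R.
  rewrite -sum_a /p /m !card_sum_nat -!natz !natr_sum -sumrB; apply: eq_bigr => j _.
  by rewrite !inE; case: (a_val j) => [->|[->|->]].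
have card_zpm : z + p + m = #|T|.
  rewrite /z /p /m !card_sum_nat -!big_split /=.
  by apply: eq_bigr => j _; case: (a_val j) => [->|[->|->]].
by move: sum_pm card_zpm; rewrite cardT; lia.
Qed.

Lemma regular_between (T : finType) (N Z : rel T) k :
  (forall x y, N x y -> ~~ Z x y) ->
  (forall x, #|Z x| + (#|N x|).*2 = k.*2) -> (forall y, #|Z^~ y| + (#|N^~ y|).*2 = k.*2) ->
  exists2 H : rel T, regular H k & forall x y, (N x y -> H x y) /\ (H x y -> N x y || Z x y).
Proof.
move=> NZ rowNZ colNZ.
have even_of n m : n + m.*2 = k.*2 -> ~~ odd n.
  by move/(congr1 odd); rewrite oddD !odd_double addbF => ->.
have [F FZ [F_row F_col]] := bipartite_halving (fun x => even_of _ _ (rowNZ x))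
  (fun y => even_of _ _ (colNZ y)).
have NF x y : N x y -> ~~ F x y by move/NZ; apply: contra; apply: FZ.
exists [rel x y | N x y || F x y]; last first.
  by move=> x y /=; split=> [-> // | /orP[-> // | /FZ ->]]; rewrite orbT.
split=> [x | y].
  rewrite (eq_card (B := [pred y | N x y || F x y])) // card_predU_disjoint; last exact: NF.
  by have := rowNZ x; rewrite -F_row -doubleD addnC => /double_inj.
rewrite (eq_card (B := [pred x | N x y || F x y])) // card_predU_disjoint.
  by have := colNZ y; rewrite -F_col -doubleD addnC => /double_inj.
by move=> x; apply: NF.
Qed.

Local Open Scope ring_scope.

Lemma perm_mxE (R : pzSemiRingType) n (s : 'S_n) i j :
  (perm_mx s : 'M[R]_n) i j = (s i == j)%:R.
Proof. by rewrite perm_mxEsub !mxE. Qed.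

Lemma disjoint01_perm_mx n (s t : 'S_n) :
  (forall x, s x != t x) -> disjoint01 (perm_mx s) (perm_mx t).
Proof.
move=> st x y; rewrite mxE !perm_mxE.
case: (eqVneq (s x) y) => [sxy|_]; case: (eqVneq (t x) y) => [txy|_]; auto.
by have := st x; rewrite sxy txy eqxx.
Qed.

Lemma sum_perm_mx n (s : 'I_n -> 'S_n) :
  (forall x, injective (fun i => s i x)) -> \sum_i perm_mx (s i) = Jmx n.
Proof.
move=> s_inj; apply/matrixP => x y; rewrite summxE !mxE.
have [g gK Kg] := injF_bij (s_inj x).
rewrite (bigD1 (g y)) //= perm_mxE Kg eqxx big1 ?addr0 // => i ne_i.
by rewrite perm_mxE; case: eqVneq => // sxi; rewrite -sxi gK eqxx in ne_i.
Qed.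

Theorem mainTheorem16 (n k : nat) (hn : n = (2 * k + 1)%N)
  (A : 'M[int]_n) (hA : semiASM A) :
  exists P : 'I_n -> 'M[int]_n,
    (forall i, is_perm_mx (P i)) /\
    (forall i j, i != j -> disjoint01 (P i) (P j)) /\
    \sum_(i < n) P i = Jmx n /\
    (forall r c, A r c = -1 -> exists i : 'I_n, (i < k)%N /\ P i r c = 1) /\
    (forall r c, A r c = 1 -> exists i : 'I_n, (k <= i)%N /\ P i r c = 1).
Proof.
case: hA => A_val [A_row A_col].
pose N := [rel r c | A r c == -1]; pose Z := [rel r c | A r c == 0].
have card_n : #|'I_n| = (2 * k + 1)%N by rewrite card_ord.
have [H regH NZH] : exists2 H : rel 'I_n,
    regular H k & forall r c, (N r c -> H r c) /\ (H r c -> N r c || Z r c).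
  apply: regular_between => [r c /= /eqP-> // | r | c]; exact: line_counts.
have le_kn : (k <= n)%N by rewrite hn; lia.
have [s [s_inj Hs]] := regular_split_decomposition (card_ord n) le_kn regH.
exists (fun i => perm_mx (s i)); split; first by move=> i; apply: perm_mx_is_perm.
split; first by move=> i j ij; apply: disjoint01_perm_mx => x; apply: contra ij => /eqP/s_inj->.
split; first exact: sum_perm_mx.
have cover r c : exists i, s i r = c by have [g _ gK] := injF_bij (s_inj r); exists (g c).
split=> r c Arc; have [i sri] := cover r c; exists i; rewrite perm_mxE sri eqxx; split=> //.
  by rewrite -(Hs i r) sri; apply: (NZH r c).1; rewrite /N /= Arc.
by rewrite leqNgt -(Hs i r) sri; apply/negP => /(NZH r c).2; rewrite /N /Z /= Arc.
Qed.
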